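(* Let $\kappa$ be a regular uncountable cardinal with $\kappa^{<\kappa}=\kappa$ and $\gamma^\omega<\kappa$ for all $\gamma<\kappa$, and let $I^i$, $I^i_\alpha$ be as in the context. For every $i<\kappa$, every limit ordinal $\delta<\kappa$ and every $\nu\in I^i$ with $\nu\notin I^i_\delta$, there is $\beta<\delta$ such that for every $\sigma\in I^i_\delta$ with $\sigma>\nu$ there is $\sigma'\in I^0_\beta$ with $\sigma>\sigma'>\nu$.
   Context: $I^0$: order $\kappa\times\mathbb Q$ lexicographically; $I^0$ is the set of $f:\omega\to\kappa\times\mathbb Q$, $f(n)=(f_1(n),f_2(n))$, with $\{n\mid f_1(n)\ne0\}$ finite, ordered by comparing at the least $n$ where they differ. Construct linear orders $I^0\subseteq I^1\subseteq\dots$ ($i<\kappa$): given $I^i$, for each $\nu\in I^i$ add a new element $\nu^{i+1}$ with $\nu^{i+1}<\nu$ and, for every $\tau\in I^i\setminus\{\nu\}$, $\tau<\nu^{i+1}$ iff $\tau<\nu$ (for distinct $\nu,\mu$, $\nu^{i+1}<\mu^{i+1}$ iff $\nu<\mu$); $I^{i+1}=I^i\cup\{\nu^{i+1}\mid\nu\in I^i\}$; at limits take unions. Representations: $I^0_\alpha=\{\nu\in I^0\mid\nu_1(n)<\alpha\ \forall n\}$; $I^{i+1}_\alpha=I^i_\alpha\cup\{\nu^{i+1}\mid\nu\in I^i_\alpha\}$; for limit $i$, $I^i_\alpha=\bigcup_{j<i}I^j_\alpha$. *)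

From mathcomp Require Import all_boot all_order all_algebra.
Import Order.TTheory GRing.Theory Num.Theory.
Set Implicit Arguments.
Unset Strict Implicit.
Unset Printing Implicit Defensive.

(* ---------- the cardinal kappa, modelled as the well-ordered set of the
   ordinals below it: a type K with a strict well-order lt ---------- *)

Definition strict_wellorder (K : Type) (lt : K -> K -> Prop) : Prop :=
  (forall x, ~ lt x x) /\
  (forall x y z, lt x y -> lt y z -> lt x z) /\
  (forall x y, lt x y \/ x = y \/ lt y x) /\
  well_founded lt.

Definition seg (K : Type) (lt : K -> K -> Prop) (a : K) : Type := {x : K | lt x a}.

Definition card_le (A B : Type) : Prop := exists f : A -> B, injective f.
Definition card_lt (A B : Type) : Prop := card_le A B /\ ~ card_le B A.

Definition initial_ordinal (K : Type) (lt : K -> K -> Prop) : Prop :=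
  forall a : K, ~ card_le K (seg lt a).

Definition uncountable (K : Type) : Prop := ~ card_le K nat.

Definition regular (K : Type) (lt : K -> K -> Prop) : Prop :=
  forall A : K -> Prop, ~ card_le K {x : K | A x} ->
    exists b : K, forall x, A x -> lt x b.

Definition kappa_lt_kappa_eq (K : Type) (lt : K -> K -> Prop) : Prop :=
  forall a : K, card_le (seg lt a -> K) K.

Definition omega_powers_small (K : Type) (lt : K -> K -> Prop) : Prop :=
  forall a : K, card_lt (nat -> seg lt a) K.

Definition kappa_hyp (K : Type) (lt : K -> K -> Prop) : Prop :=
  strict_wellorder lt /\ initial_ordinal lt /\ uncountable K /\ regular lt /\
  kappa_lt_kappa_eq lt /\ omega_powers_small lt.

Definition is_zero (K : Type) (lt : K -> K -> Prop) (z : K) : Prop :=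
  forall x, ~ lt x z.
Definition is_succ (K : Type) (lt : K -> K -> Prop) (i j : K) : Prop :=
  lt i j /\ forall x, ~ (lt i x /\ lt x j).
Definition is_limit (K : Type) (lt : K -> K -> Prop) (d : K) : Prop :=
  (exists x, lt x d) /\ forall x, lt x d -> exists y, lt x y /\ lt y d.

Definition finsupp (K : Type) (lt : K -> K -> Prop) (f : nat -> K * rat) : Prop :=
  exists s : seq nat, forall n, ~ is_zero lt (f n).1 -> n \in s.

Definition lexKQ (K : Type) (lt : K -> K -> Prop) (p q : K * rat) : Prop :=
  lt p.1 q.1 \/ (p.1 = q.1 /\ (p.2 < q.2)%R).

Definition ltI0 (K : Type) (lt : K -> K -> Prop) (f g : nat -> K * rat) : Prop :=
  exists n, (forall m, (m < n)%N -> f m = g m) /\ lexKQ lt (f n) (g n).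

(* I^0_beta, as a subset of the ambient carrier U via the embedding e *)
Definition I0a (K U : Type) (lt : K -> K -> Prop) (e : (nat -> K * rat) -> U)
  (beta : K) (x : U) : Prop :=
  exists f, [/\ finsupp lt f, (forall n, lt (f n).1 beta) & x = e f].

(* ---------- the construction I^0 ⊆ I^1 ⊆ ... (i < kappa) ----------
   All I^i live in a common carrier U with a linear order ltU; e embeds I^0,
   up i nu is the new element nu^{i+1}; I i = I^i, Ia i alpha = I^i_alpha. *)
Record is_construction (K : Type) (lt : K -> K -> Prop) (U : Type)
  (ltU : U -> U -> Prop) (e : (nat -> K * rat) -> U) (up : K -> U -> U)
  (I : K -> U -> Prop) (Ia : K -> K -> U -> Prop) : Prop := {
  ltU_irr : forall x, ~ ltU x x;
  ltU_trans : forall x y z, ltU x y -> ltU y z -> ltU x z;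
  ltU_total : forall x y, ltU x y \/ x = y \/ ltU y x;
  e_inj : forall f g, finsupp lt f -> finsupp lt g -> e f = e g -> f = g;
  e_ord : forall f g, finsupp lt f -> finsupp lt g ->
            (ltU (e f) (e g) <-> ltI0 lt f g);
  I_zero : forall z, is_zero lt z ->
            forall x, I z x <-> exists f, finsupp lt f /\ x = e f;
  I_succ : forall i j, is_succ lt i j ->
            forall x, I j x <-> (I i x \/ exists nu, I i nu /\ x = up i nu);
  up_new : forall i nu, I i nu -> ~ I i (up i nu);
  up_inj : forall i nu mu, I i nu -> I i mu -> up i nu = up i mu -> nu = mu;
  up_below : forall i nu, I i nu -> ltU (up i nu) nu;
  up_place : forall i nu tau, I i nu -> I i tau -> tau <> nu ->
            (ltU tau (up i nu) <-> ltU tau nu);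
  up_mono : forall i nu mu, I i nu -> I i mu -> nu <> mu ->
            (ltU (up i nu) (up i mu) <-> ltU nu mu);
  I_limit : forall j, is_limit lt j ->
            forall x, I j x <-> exists k, lt k j /\ I k x;
  Ia_zero : forall z, is_zero lt z -> forall alpha x, Ia z alpha x <-> I0a lt e alpha x;
  Ia_succ : forall i j, is_succ lt i j -> forall alpha x,
            Ia j alpha x <-> (Ia i alpha x \/ exists nu, Ia i alpha nu /\ x = up i nu);
  Ia_limit : forall j, is_limit lt j -> forall alpha x,
            Ia j alpha x <-> exists k, lt k j /\ Ia k alpha x
}.

From mathcomp Require Import all_boot all_order all_algebra.
From Stdlib Require Import Classical Wf_nat.
Import Num.Theory.
Set Implicit Arguments.
Unset Strict Implicit.
Unset Printing Implicit Defensive.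

(* Every x in I^i descends, through the operations nu |-> nu^{j+1}, from a
   unique root eta in I^0: x <= eta and no element of I^0 lies strictly
   between x and eta; moreover x is in I^i_alpha iff eta is in I^0_alpha.
   This reduces the theorem to I^0.  There, if eta is not in I^0_delta, let n
   be least with eta_1(n) >= delta and choose beta < delta above eta_1(k) for
   k < n.  An element rho of I^0_delta above eta first differs from eta at
   some m < n, and keeping eta below m, putting a rational between eta(m) and
   rho(m) at m and zeros after m gives an element of I^0_beta strictly between
   eta and rho. *)

Section Ordinals.

Variables (K : Type) (lt : K -> K -> Prop).

Lemma zero_succ_or_limit i :
  is_zero lt i \/ (exists p, is_succ lt p i) \/ is_limit lt i.
Proof.
have [[x xi]|no_lt] := classic (exists x, lt x i); last first.
  by left=> x xi; apply: no_lt; exists x.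
have [lim|] := classic (forall x, lt x i -> exists y, lt x y /\ lt y i).
  by right; right; split=> //; exists x.
move=> /not_all_ex_not [p] /(imply_to_and (lt p i)) [pi no_y].
by right; left; exists p; split=> // y [py yi]; apply: no_y; exists y.
Qed.

Lemma ordinal_ind : well_founded lt -> forall P : K -> Prop,
  (forall z, is_zero lt z -> P z) ->
  (forall p j, is_succ lt p j -> P p -> P j) ->
  (forall j, is_limit lt j -> (forall k, lt k j -> P k) -> P j) ->
  forall i, P i.
Proof.
move=> lt_wf P Pzero Psucc Plimit i; elim/(well_founded_ind lt_wf): i => i IH.
have [zi|[[p pi]|li]] := zero_succ_or_limit i.
- exact: Pzero.
- exact: Psucc pi (IH p pi.1).
- exact: Plimit.
Qed.

Lemma exists_zero : well_founded lt -> K -> exists z, is_zero lt z.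
Proof.
move=> lt_wf; elim/(ordinal_ind lt_wf) => [z zz|p j _ //|j [[k kj] _] IH].
  by exists z.
exact: IH kj.
Qed.

Hypotheses (lt_trans : forall x y z, lt x y -> lt y z -> lt x z)
  (lt_total : forall x y, lt x y \/ x = y \/ lt y x).

Lemma zero_lt_limit z d : is_zero lt z -> is_limit lt d -> lt z d.
Proof.
move=> zz [[x xd] _]; have [zx|[->|xz]] := lt_total z x => //.
- exact: lt_trans zx xd.
- by case: (zz x).
Qed.

Lemma limit_ub2 d x y : is_limit lt d -> lt x d -> lt y d ->
  exists b, [/\ lt b d, lt x b & lt y b].
Proof.
move=> [_ dlim] xd yd.
suff [c [cd xc yc]] : exists c,
    [/\ lt c d, forall b, lt c b -> lt x b & forall b, lt c b -> lt y b].
  by have [b [cb bd]] := dlim c cd; exists b; split; auto.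
have [xy|[<-|yx]] := lt_total x y.
- by exists y; split=> // b; apply: lt_trans.
- by exists x.
- by exists x; split=> // b; apply: lt_trans.
Qed.

Lemma limit_ub_finite d x (a : nat -> K) n : is_limit lt d -> lt x d ->
  (forall k, (k < n)%N -> lt (a k) d) ->
  exists b, [/\ lt b d, lt x b & forall k, (k < n)%N -> lt (a k) b].
Proof.
move=> dl xd; elim: n => [_|n IH ad].
  by have [b [xb bd]] := dl.2 x xd; exists b.
have [c [cd xc ac]] := IH (fun k kn => ad k (ltnW kn)).
have [b [bd cb anb]] := limit_ub2 dl cd (ad n (ltnSn n)).
exists b; split=> [//||k]; first exact: lt_trans xc cb.
by rewrite ltnS leq_eqVlt => /predU1P [->|kn] //; apply: lt_trans (ac k kn) cb.
Qed.

End Ordinals.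

Section FirstStage.

Variables (K : Type) (lt : K -> K -> Prop).

Lemma lexKQ_between p q : lexKQ lt p q ->
  exists c : rat, lexKQ lt p (p.1, c) /\ lexKQ lt (p.1, c) q.
Proof.
case=> [p1q1|[p1q1 p2q2]].
  by exists (p.2 + 1)%R; split; [right; split=> //=; rewrite ltrDl ltr01 | left].
by have [pc cq] := midf_lt p2q2; exists ((p.2 + q.2) / 2)%R; split; right.
Qed.

Lemma ltI0_between z f h m : is_zero lt z ->
  (forall k, (k < m)%N -> f k = h k) -> lexKQ lt (f m) (h m) ->
  exists g, [/\ finsupp lt g, ltI0 lt f g, ltI0 lt g h &
    forall k, (g k).1 = if (k <= m)%N then (f k).1 else z].
Proof.
move=> zz fh /lexKQ_between [c [fc ch]].
pose g k := if (k < m)%N then f k else if k == m then ((f m).1, c) else (z, 0%R).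
have gm : g m = ((f m).1, c) by rewrite /g ltnn eqxx.
have g_lt k : (k < m)%N -> g k = f k by rewrite /g => ->.
exists g; split.
- exists (iota 0 m.+1) => k; rewrite mem_iota add0n ltnS /g.
  by case: ltngtP => // _ []; apply: zz.
- by exists m; split=> [k /g_lt ->|]; rewrite ?gm.
- by exists m; split=> [k km|]; rewrite ?gm // g_lt ?fh.
- by move=> k; rewrite /g [(k <= m)%N]leq_eqVlt orbC; case: ltngtP => // ->.
Qed.

Hypotheses (lt_trans : forall x y z, lt x y -> lt y z -> lt x z)
  (lt_total : forall x y, lt x y \/ x = y \/ lt y x) (lt_wf : well_founded lt).

Lemma ltI0_bounded_between d eta : is_limit lt d -> ~ (forall n, lt (eta n).1 d) ->
  exists beta, lt beta d /\
    forall rho, (forall n, lt (rho n).1 d) -> ltI0 lt eta rho ->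
      exists g, [/\ finsupp lt g, forall n, lt (g n).1 beta, ltI0 lt eta g
                  & ltI0 lt g rho].
Proof.
move=> dl /not_all_ex_not eta_unb.
have [n [[etan_d n_min] _]] :=
  dec_inh_nat_subset_has_unique_least_element _ (fun n => classic _) eta_unb.
have eta_d k : (k < n)%N -> lt (eta k).1 d.
  by move=> kn; apply: NNPP => /n_min /ssrnat.leP; rewrite leqNgt kn.
have [z zz] := exists_zero lt_wf d.
have z_d := zero_lt_limit lt_trans lt_total zz dl.
have [beta [beta_d z_beta eta_beta]] :=
  limit_ub_finite lt_trans lt_total dl z_d eta_d.
exists beta; split=> // rho rho_d [m [eta_rho lex]].
have mn : (m < n)%N.
  case: (ltngtP m n) => [//|nm|m_n]; case: etan_d.
  - by rewrite eta_rho.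
  - subst m; case: lex => [/lt_trans lt_en|[-> _]]; last exact: rho_d.
    exact/lt_en/rho_d.
have [g [gs eta_g g_rho g1]] := ltI0_between zz eta_rho lex.
exists g; split=> // k; rewrite g1; case: leqP => // km.
exact/eta_beta/(leq_ltn_trans km).
Qed.

End FirstStage.

Section Construction.

Variables (K : Type) (lt : K -> K -> Prop) (U : Type) (ltU : U -> U -> Prop)
  (e : (nat -> K * rat) -> U) (up : K -> U -> U)
  (I : K -> U -> Prop) (Ia : K -> K -> U -> Prop).
Hypotheses (hC : is_construction lt ltU e up I Ia) (lt_wf : well_founded lt).

Record rooted (x : U) (eta : nat -> K * rat) : Prop := Rooted {
  root_finsupp : finsupp lt eta;
  root_le : x = e eta \/ ltU x (e eta);
  root_cut : forall g, finsupp lt g -> g <> eta ->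
    ltU (e g) x <-> ltU (e g) (e eta) }.

Lemma rooted_e f : finsupp lt f -> rooted (e f) f.
Proof. by move=> fs; split=> //; left. Qed.

Lemma rooted_not_lt x eta : rooted x eta -> ~ ltU (e eta) x.
Proof.
case=> _ [<-|x_eta] _; first exact: (ltU_irr hC).
by move=> eta_x; exact: (ltU_irr hC (ltU_trans hC x_eta eta_x)).
Qed.

Lemma rooted_below x eta g : rooted x eta -> ltU (e eta) (e g) -> ltU x (e g).
Proof. by case=> _ [->|x_eta] _ // /(ltU_trans hC x_eta). Qed.

Lemma rooted_above x eta g : rooted x eta -> finsupp lt g ->
  ltU (e g) (e eta) -> ltU (e g) x.
Proof.
move=> rx gs g_eta; have g_neq : g <> eta.
  by move=> geta; rewrite geta in g_eta; exact: (ltU_irr hC g_eta).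
exact/(root_cut rx gs g_neq).
Qed.

Lemma rooted_unique x eta rho : rooted x eta -> rooted x rho -> eta = rho.
Proof.
move=> r_eta r_rho; apply: NNPP => neq.
have [fs_eta fs_rho] := (root_finsupp r_eta, root_finsupp r_rho).
have [lt_er|[/(e_inj hC fs_eta fs_rho)//|lt_re]] := ltU_total hC (e eta) (e rho).
- exact: rooted_not_lt r_eta (rooted_above r_rho fs_eta lt_er).
- exact: rooted_not_lt r_rho (rooted_above r_eta fs_rho lt_re).
Qed.

Lemma rooted_mono x y eta rho : rooted x eta -> rooted y rho -> ltU x y ->
  eta <> rho -> ltU (e eta) (e rho).
Proof.
move=> rx ry xy neq; have [fs_eta fs_rho] := (root_finsupp rx, root_finsupp ry).
have [//|[/(e_inj hC fs_eta fs_rho)//|lt_re]] := ltU_total hC (e eta) (e rho).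
case: (rooted_not_lt ry).
exact: (ltU_trans hC (rooted_above rx fs_rho lt_re) xy).
Qed.

Lemma I0_sub_I i g : finsupp lt g -> I i (e g).
Proof.
move=> gs; elim/(ordinal_ind lt_wf): i => [z zz|p j pj IH|j jl IH].
- by apply/(I_zero hC zz); exists g.
- by apply/(I_succ hC pj); left.
- have [[k kj] _] := jl; apply/(I_limit hC jl); exists k; split=> //; exact: IH.
Qed.

Lemma Ia_sub_I i a x : Ia i a x -> I i x.
Proof.
elim/(ordinal_ind lt_wf): i x => [z zz|p j pj IH|j jl IH] x.
- by move=> /(Ia_zero hC zz) [f [fs _ ->]]; apply/(I_zero hC zz); exists f.
- move=> /(Ia_succ hC pj) [/IH xp|[nu [/IH nup ->]]]; apply/(I_succ hC pj).
    by left.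
  by right; exists nu.
- move=> /(Ia_limit hC jl) [k [kj /(IH k kj) xk]].
  by apply/(I_limit hC jl); exists k.
Qed.

Lemma rooted_up j nu eta : I j nu -> rooted nu eta -> rooted (up j nu) eta.
Proof.
move=> nuI [fs le cut]; split=> // [|g gs neq].
  right; case: le => [<-|nu_eta]; first exact: (up_below hC nuI).
  exact: (ltU_trans hC (up_below hC nuI) nu_eta).
rewrite -(cut g gs neq); apply: (up_place hC nuI (I0_sub_I j gs)) => g_nu.
case: le => [nu_e|nu_eta].
  by apply: neq; apply: (e_inj hC gs fs); rewrite g_nu.
apply: (ltU_irr hC (x := nu)).
by rewrite -{1}g_nu; apply/(cut g gs neq); rewrite g_nu.
Qed.

Lemma rooted_exists i x : I i x -> exists eta, rooted x eta.
Proof.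
elim/(ordinal_ind lt_wf): i x => [z zz|p j pj IH|j jl IH] x.
- by move=> /(I_zero hC zz) [f [fs ->]]; exists f; apply: rooted_e.
- move=> /(I_succ hC pj) [/IH //|[nu [nuI ->]]].
  by have [eta r] := IH nu nuI; exists eta; apply: rooted_up.
- by move=> /(I_limit hC jl) [k [kj /(IH k kj)]].
Qed.

Lemma Ia_succ_old p j a x : is_succ lt p j -> I p x -> Ia j a x <-> Ia p a x.
Proof.
move=> pj xI; rewrite (Ia_succ hC pj); split; last by left.
case=> [//|[nu [/Ia_sub_I nuI x_up]]].
by case: (up_new hC nuI); rewrite -x_up.
Qed.

Lemma Ia_succ_up p j a nu : is_succ lt p j -> I p nu ->
  Ia j a (up p nu) <-> Ia p a nu.
Proof.
move=> pj nuI; rewrite (Ia_succ hC pj); split; last by right; exists nu.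
case=> [/Ia_sub_I /(up_new hC nuI) //|[mu [mua]]].
by move=> /(up_inj hC nuI (Ia_sub_I mua)) ->.
Qed.

Lemma Ia_iff_root i a x eta : I i x -> rooted x eta ->
  Ia i a x <-> I0a lt e a (e eta).
Proof.
elim/(ordinal_ind lt_wf): i x eta => [z zz|p j pj IH|j jl IH] x eta.
- move=> /(I_zero hC zz) [f [fs ->]] r.
  by rewrite (rooted_unique r (rooted_e fs)); exact: (Ia_zero hC zz).
- move=> /(I_succ hC pj) [xI r|[nu [nuI ->]] r].
    by rewrite (Ia_succ_old a pj xI); apply: IH.
  rewrite (Ia_succ_up a pj nuI); have [eta' r'] := rooted_exists nuI.
  by rewrite (rooted_unique r (rooted_up nuI r')); apply: IH.
- move=> /(I_limit hC jl) [k [kj xk]] r; rewrite (Ia_limit hC jl); split.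
    by move=> [k' [k'j xa]]; apply/(IH k' k'j x eta (Ia_sub_I xa) r).
  by move=> eta_a; exists k; split=> //; apply/(IH k kj x eta xk r).
Qed.

Lemma I0a_e a f : finsupp lt f -> I0a lt e a (e f) <-> forall n, lt (f n).1 a.
Proof.
move=> fs; split=> [[g [gs ga /(e_inj hC fs gs) ->]] //|fa].
by exists f.
Qed.

End Construction.

Theorem mainTheorem11 (K : Type) (lt : K -> K -> Prop) (U : Type)
  (ltU : U -> U -> Prop) (e : (nat -> K * rat) -> U) (up : K -> U -> U)
  (I : K -> U -> Prop) (Ia : K -> K -> U -> Prop)
  (hK : kappa_hyp lt) (hC : is_construction lt ltU e up I Ia) :
  forall (i delta : K), is_limit lt delta ->
  forall nu : U, I i nu -> ~ Ia i delta nu ->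
  exists beta : K, lt beta delta /\
    forall sigma : U, Ia i delta sigma -> ltU nu sigma ->
      exists sigma' : U, [/\ I0a lt e beta sigma', ltU sigma' sigma & ltU nu sigma'].
Proof.
move=> i delta dl nu nuI nu_delta.
have [[_ [lt_trans [lt_total lt_wf]]] _] := hK.
have [eta r_nu] := rooted_exists hC lt_wf nuI.
have eta_fs := root_finsupp r_nu.
have eta_unb : ~ (forall n, lt (eta n).1 delta).
  by rewrite -(I0a_e hC _ eta_fs) -(Ia_iff_root hC lt_wf _ nuI r_nu).
have [beta [beta_delta between]] :=
  ltI0_bounded_between lt_trans lt_total lt_wf dl eta_unb.
exists beta; split=> // sigma sigma_delta nu_sigma.
have sigmaI := Ia_sub_I hC lt_wf sigma_delta.
have [rho r_sigma] := rooted_exists hC lt_wf sigmaI.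
have rho_fs := root_finsupp r_sigma.
have rho_delta : forall n, lt (rho n).1 delta.
  by rewrite -(I0a_e hC _ rho_fs) -(Ia_iff_root hC lt_wf _ sigmaI r_sigma).
have eta_rho : ltI0 lt eta rho.
  apply/(e_ord hC eta_fs rho_fs)/(rooted_mono hC r_nu r_sigma nu_sigma).
  by move=> eq; apply: eta_unb; rewrite eq.
have [g [g_fs g_beta eta_g g_rho]] := between rho rho_delta eta_rho.
exists (e g); split.
- by exists g.
- exact/(rooted_above hC r_sigma g_fs)/(e_ord hC g_fs rho_fs).
- exact/(rooted_below hC r_nu)/(e_ord hC eta_fs g_fs).
Qed.
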